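(* For every integer $k\ge 1$, let $P_k=(p_{ij})$ be the $2^k\times 2^k$ matrix with $p_{ij}=1$ if there is $n\in\{1,\dots,2^k\}$ with $i=\sigma^{-1}_{2^k}(n+1)$ and $j=\sigma^{-1}_{2^k}(n)$ (with the convention $\sigma^{-1}_{2^k}(2^k+1)=\sigma^{-1}_{2^k}(1)$), and $p_{ij}=0$ otherwise. Then $P_k=A_{2^k}$ for every $k\ge 1$.
   Context: For every integer $k\ge 0$ the map $\sigma^{-1}_{2^k}:\{1,\dots,2^k\}\to\{1,\dots,2^k\}$ is defined recursively by $\sigma^{-1}_{2^0}(1)=1$ and, for $k\ge 1$ and $1\le n\le 2^{k-1}$, $\sigma^{-1}_{2^k}(2n-1)=\sigma^{-1}_{2^{k-1}}(n)$ and $\sigma^{-1}_{2^k}(2n)=2^k+1-\sigma^{-1}_{2^{k-1}}(n)$; it is a permutation of $\{1,\dots,2^k\}$ (the inverse of the permutation encoding the ordering of the superstable $2^k$-periodic orbit of a period-doubling cascade of a unimodal map). For $r\ge 1$, $I_r$ denotes the $r\times r$ identity matrix and $I^*_r=(a_{ij})$ the $r\times r$ matrix with $a_{ij}=1$ if $i+j=r+1$ and $a_{ij}=0$ otherwise. The matrices $A_{2^k}$ are defined by $$A_{2}=\begin{pmatrix}0&1\\1&0\end{pmatrix},\quad A_{4}=\begin{pmatrix}0&0&1&0\\0&0&0&1\\0&1&0&0\\1&0&0&0\end{pmatrix},\quad A_{2^k}=\begin{pmatrix}0 & A_{2^{k-2}} & 0\\ 0&0&I_{2^{k-2}}\\ I^*_{2^{k-1}}&0&0\end{pmatrix}\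 (k\ge 3),$$ where in the last block matrix the row blocks have sizes $2^{k-2},2^{k-2},2^{k-1}$ and the column blocks have sizes $2^{k-1},2^{k-2},2^{k-2}$, and $0$ denotes zero blocks. *)

From HB Require Import structures.
From mathcomp Require Import all_boot all_order all_algebra.
From mathcomp Require Import zify.
Set Implicit Arguments. Unset Strict Implicit. Unset Printing Implicit Defensive.
Import GRing.Theory.
Local Open Scope ring_scope.

(* sigma^{-1}_{2^k} on {1,...,2^k} (1-based, values outside are junk):
   sinv 0 n = 1;  sinv (k+1) (2m-1) = sinv k m;  sinv (k+1) (2m) = 2^(k+1)+1 - sinv k m. *)
Fixpoint sinv (k n : nat) : nat :=
  match k with
  | 0 => 1
  | k'.+1 => if odd n then sinv k' (n.+1./2)
             else (2 ^ k'.+1 + 1 - sinv k' n./2)%N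
  end.

Definition sinvc (k n : nat) : nat :=
  if n == (2 ^ k).+1 then sinv k 1 else sinv k n.

(* P_k : p_{ij} = 1 iff exists n in {1..2^k}, i = sinv(n+1), j = sinv(n)
   (matrix indices are 0-based, so i.+1, j.+1 are the paper's indices; n = m.+1). *)
Definition Pmx (R : nzRingType) (k : nat) : 'M[R]_(2 ^ k) :=
  \matrix_(i < 2 ^ k, j < 2 ^ k)
    ([exists m : 'I_(2 ^ k), (i.+1 == sinvc k m.+2) && (j.+1 == sinvc k m.+1)] %:R).

(* I^*_r : anti-identity, a_{ij} = 1 iff i + j = r + 1 (1-based), i.e. i + j = r - 1 (0-based) *)
Definition antiI (R : nzRingType) (r : nat) : 'M[R]_r :=
  \matrix_(i < r, j < r) ((i + j == r.-1)%N %:R).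

Definition A2 (R : nzRingType) : 'M[R]_2 :=
  \matrix_(i < 2, j < 2) (((i : nat), (j : nat)) \in [:: (0, 1); (1, 0)])%N%:R.

Definition A4 (R : nzRingType) : 'M[R]_4 :=
  \matrix_(i < 4, j < 4)
    (((i : nat), (j : nat)) \in [:: (0, 2); (1, 3); (2, 1); (3, 0)])%N%:R.

Lemma Amx_rows (k : nat) : (2 ^ k + (2 ^ k + 2 ^ k.+1) = 2 ^ k.+2)%N.
Proof. by rewrite !expnS; lia. Qed.

Lemma Amx_cols (k : nat) : (2 ^ k.+1 + (2 ^ k + 2 ^ k) = 2 ^ k.+2)%N.
Proof. by rewrite !expnS; lia. Qed.

(* A_{2^k}; for k >= 3 (k = k1 + 2, k1 >= 1) the block matrix
      [ 0       A_{2^{k-2}}  0        ]   rows   2^{k-2}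
      [ 0       0            I        ]   rows   2^{k-2}
      [ I^*     0            0        ]   rows   2^{k-1}
   cols 2^{k-1}  2^{k-2}     2^{k-2}
   The value at k = 0 is junk (A_1 is not defined in the paper). *)
Definition Ablock (R : nzRingType) (k1 : nat) (B : 'M[R]_(2 ^ k1)) :
  'M[R]_(2 ^ k1.+2) :=
  castmx (Amx_rows k1, Amx_cols k1)
    (col_mx (row_mx 0 (row_mx B 0))
      (col_mx (row_mx 0 (row_mx 0 1%:M))
              (row_mx (antiI R (2 ^ k1.+1)) (row_mx 0 0)))).

Fixpoint Amx (R : nzRingType) (k : nat) {struct k} : 'M[R]_(2 ^ k) :=
  match k return 'M[R]_(2 ^ k) with
  | 0 => 1%:M
  | 1 => A2 R
  | k1.+2 =>
      match k1 return 'M[R]_(2 ^ k1.+2) -> 'M[R]_(2 ^ k1.+2) with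
      | 0 => fun _ => A4 R
      | _.+1 => fun X => X
      end (Ablock (Amx R k1))
  end.

From mathcomp Require Import all_boot all_order all_algebra.
From mathcomp Require Import zify.

Set Implicit Arguments.
Unset Strict Implicit.
Unset Printing Implicit Defensive.

(* Both matrices are 0/1 matrices with exactly one 1 in each column, so it
   suffices to compare the row functions.  In P_k the column sigma(n) has its 1
   in row sigma(n+1).  In A_{2^k} (k >= 2, N = 2^(k-2)) the block shape sends
   column j to row 4N-1-j for j < 2N, to row j-2N for j >= 3N, and to row
   A_{2^(k-2)}(j-2N) in between.  Unfolding the recursion of sigma twice gives,
   with t = sigma_{k-2}(q) (0-based), the values t, 4N-1-t, 2N-1-t, 2N+t at
   4q, ..., 4q+3; the first three are mapped to their successors by the
   explicit blocks, and 2N+t is sent by the copy of A_{2^(k-2)} to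
   sigma_{k-2}(q+1) = sigma_k(4q+4) by induction. *)

Definition sinv0 (k m : nat) : nat := (sinv k m.+1).-1.

Lemma sinv_bounds k n : 0 < sinv k n <= 2 ^ k.
Proof.
elim: k n => [|k IH] n //=.
by case: ifP => _; [move: (IH (uphalf n)) | move: (IH n./2)]; rewrite expnS; lia.
Qed.

Lemma sinv0_lt k m : sinv0 k m < 2 ^ k.
Proof. by move: (sinv_bounds k m.+1); rewrite /sinv0; lia. Qed.

Lemma sinv0_double k m : sinv0 k.+1 m.*2 = sinv0 k m.
Proof. by rewrite /sinv0 /= odd_double /= doubleK. Qed.

Lemma sinv0_doubleS k m : sinv0 k.+1 m.*2.+1 = (2 ^ k.+1).-1 - sinv0 k m.
Proof.
rewrite /sinv0 /= odd_double /= doubleK.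
by move: (sinv_bounds k m.+1); rewrite expnS; lia.
Qed.

Lemma sinv0_onto k v : v < 2 ^ k -> exists2 m, m < 2 ^ k & sinv0 k m = v.
Proof.
elim: k v => [|k IH] v v_lt; first by exists 0; case: v v_lt.
have [v_lo | v_hi] := ltnP v (2 ^ k).
  have [m m_lt <-] := IH v v_lo.
  by exists m.*2; [rewrite expnS; lia | exact: sinv0_double].
have v'_lt : (2 ^ k.+1).-1 - v < 2 ^ k by rewrite expnS in v_lt *; lia.
have [m m_lt m_eq] := IH _ v'_lt.
by exists m.*2.+1; [rewrite expnS; lia | rewrite sinv0_doubleS m_eq; lia].
Qed.

Lemma sinvc_sinv0 k m : m < 2 ^ k -> sinvc k m.+1 = (sinv0 k m).+1.
Proof.
move=> m_lt; rewrite /sinvc ifN_eq; last by lia.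
by move: (sinv_bounds k m.+1); rewrite /sinv0; lia.
Qed.

Lemma sinvc_succ k m : m < 2 ^ k -> sinvc k m.+2 = (sinv0 k (m.+1 %% 2 ^ k)).+1.
Proof.
move=> m_lt; have [m_last | m_lt'] := eqVneq m.+1 (2 ^ k).
  rewrite m_last modnn /sinvc /sinv0 -m_last eqxx.
  by move: (sinv_bounds k 1); lia.
by rewrite modn_small ?sinvc_sinv0 //; lia.
Qed.

Lemma sinv0_mul4 k q : let t := sinv0 k q in
  [/\ sinv0 k.+2 (q * 4) = t, sinv0 k.+2 (q * 4).+1 = (2 ^ k.+2).-1 - t,
      sinv0 k.+2 (q * 4).+2 = (2 ^ k.+1).-1 - t
    & sinv0 k.+2 (q * 4).+3 = 2 ^ k.+1 + t].
Proof.
have -> : q * 4 = q.*2.*2 by rewrite -!muln2 -mulnA.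
rewrite /= -!doubleS !(sinv0_double, sinv0_doubleS); split=> //.
by move: (sinv0_lt k q); rewrite ?expnS; lia.
Qed.

Definition Ablock_fun (g : nat -> nat) (N j : nat) : nat :=
  if j < N.*2 then (N * 4).-1 - j
  else if j < N * 3 then g (j - N.*2) else j - N.*2.

Fixpoint Aperm (k j : nat) : nat :=
  match k with
  | 0 => j
  | 1 => 1 - j
  | k'.+2 => Ablock_fun (Aperm k') (2 ^ k') j
  end.

Lemma Aperm_sinv0 k m : m < 2 ^ k -> Aperm k (sinv0 k m) = sinv0 k (m.+1 %% 2 ^ k).
Proof.
elim/ltn_ind: k m => -[|[|k]] IH m m_lt; first by case: m m_lt.
  by case: m m_lt => [|[|]].
have IHk := IH k (leqnSn k.+1).
have q_lt : m %/ 4 < 2 ^ k by move: m_lt; rewrite ltn_divLR // !expnS; lia.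
have [t0 t1 t2 t3] := sinv0_mul4 k (m %/ 4).
have t_lt := sinv0_lt k (m %/ 4).
rewrite (divn_eq m 4); move: (ltn_pmod m (isT : 0 < 4)).
set q := m %/ 4; set t := sinv0 k q in t0 t1 t2 t3 t_lt *.
case: (m %% 4) => [|[|[|[|r]]]] // _; rewrite ?(addn0, addn1, addn2, addn3).
- rewrite t0 modn_small ?t1; last by rewrite !expnS; lia.
  by rewrite /= /Ablock_fun ifT; rewrite ?expnS; lia.
- rewrite t1 modn_small ?t2; last by rewrite !expnS; lia.
  by rewrite /= /Ablock_fun !ifF; rewrite ?expnS; lia.
- rewrite t2 modn_small ?t3; last by rewrite !expnS; lia.
  by rewrite /= /Ablock_fun ifT; rewrite ?expnS; lia.
have -> : (q * 4).+4 = q.+1 * 4 by lia.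
have -> : 2 ^ k.+2 = 2 ^ k * 4 by rewrite !expnSr -mulnA.
rewrite -muln_modl; case: (sinv0_mul4 k (q.+1 %% 2 ^ k)) => -> _ _ _.
rewrite t3 -IHk //= /Ablock_fun ifF ?ifT; try by rewrite expnS; lia.
by congr Aperm; rewrite expnS; lia.
Qed.

Lemma Aperm_lt k j : j < 2 ^ k -> Aperm k j < 2 ^ k.
Proof. by case/sinv0_onto=> m m_lt <-; rewrite Aperm_sinv0 // sinv0_lt. Qed.

Section RelationMatrix.

Variable R : nzRingType.
Local Open Scope ring_scope.

Definition rel_mx m n (r : nat -> nat -> bool) : 'M[R]_(m, n) :=
  \matrix_(i, j) (r i j)%:R.
Arguments rel_mx {m n}.

Lemma eq_rel_mx m n (r1 r2 : nat -> nat -> bool) :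
    (forall i j, (i < m)%N -> (j < n)%N -> r1 i j = r2 i j) ->
  rel_mx r1 = rel_mx r2 :> 'M_(m, n).
Proof. by move=> eq_r; apply/matrixP => i j; rewrite !mxE eq_r. Qed.

Lemma const0_rel_mx m n : 0 = rel_mx (fun _ _ => false) :> 'M_(m, n).
Proof. by apply/matrixP => i j; rewrite !mxE. Qed.

Lemma scalar1_rel_mx n : 1%:M = rel_mx (fun i j => i == j) :> 'M_n.
Proof. by apply/matrixP => i j; rewrite !mxE. Qed.

Lemma antiI_rel_mx n : antiI R n = rel_mx (fun i j => i + j == n.-1)%N.
Proof. by []. Qed.

Lemma row_mx_rel m n1 n2 r1 r2 :
  row_mx (rel_mx r1 : 'M_(m, n1)) (rel_mx r2 : 'M_(m, n2)) =
  rel_mx (fun i j => if (j < n1)%N then r1 i j else r2 i (j - n1)%N).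
Proof.
apply/matrixP => i j; rewrite !mxE.
by case: splitP => j' /= ->; rewrite mxE ?addKn.
Qed.

Lemma col_mx_rel m1 m2 n r1 r2 :
  col_mx (rel_mx r1 : 'M_(m1, n)) (rel_mx r2 : 'M_(m2, n)) =
  rel_mx (fun i j => if (i < m1)%N then r1 i j else r2 (i - m1)%N j).
Proof.
apply/matrixP => i j; rewrite !mxE.
by case: splitP => i' /= ->; rewrite mxE ?addKn.
Qed.

Lemma castmx_rel m1 n1 m2 n2 (eq_mn : (m1 = m2) * (n1 = n2)) r :
  castmx eq_mn (rel_mx r) = rel_mx r.
Proof. by apply/matrixP => i j; rewrite castmxE !mxE. Qed.

Lemma Ablock_rel k (g : nat -> nat) : (forall j, j < 2 ^ k -> g j < 2 ^ k)%N ->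
  Ablock (rel_mx (fun i j => i == g j) : 'M_(2 ^ k)) =
  rel_mx (fun i j => i == Ablock_fun g (2 ^ k) j).
Proof.
move=> g_lt; rewrite /Ablock !const0_rel_mx scalar1_rel_mx.
rewrite antiI_rel_mx !row_mx_rel !col_mx_rel castmx_rel.
apply: eq_rel_mx => i j i_lt j_lt; rewrite /Ablock_fun -mul2n -expnS.
move: (g_lt (j - 2 ^ k.+1)%N) i_lt j_lt; rewrite !expnS.
by repeat case: ifP; lia.
Qed.

Lemma Amx_rel k : Amx R k = rel_mx (fun i j => i == Aperm k j).
Proof.
elim/ltn_ind: k => -[|[|[|k]]] IH.
- exact: scalar1_rel_mx.
- by apply/matrixP => -[[|[|i]] ?] -[[|[|j]] ?]; rewrite !mxE.
- by apply/matrixP => -[[|[|[|[|i]]]] ?] -[[|[|[|[|j]]]] ?]; rewrite !mxE.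
change (Amx R k.+3) with (Ablock (Amx R k.+1)).
by rewrite IH // Ablock_rel //; apply: Aperm_lt.
Qed.

Lemma Pmx_rel k : Pmx R k = rel_mx (fun i j => i == Aperm k j).
Proof.
apply/matrixP => i j; rewrite !mxE; congr (nat_of_bool _)%:R.
apply/existsP/eqP => [[m /andP[/eqP i_eq /eqP j_eq]] | ->].
  move: i_eq j_eq; rewrite sinvc_succ // sinvc_sinv0 // => -[->] [->].
  by rewrite Aperm_sinv0.
have [m m_lt <-] := sinv0_onto (ltn_ord j).
by exists (Ordinal m_lt); rewrite /= sinvc_succ // sinvc_sinv0 // Aperm_sinv0 ?eqxx.
Qed.

End RelationMatrix.

Theorem theorem2 (R : nzRingType) (k : nat) : (1 <= k)%N -> Pmx R k = Amx R k.
Proof. by move=> _; rewrite Pmx_rel Amx_rel. Qed.
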